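(* Every formula derivable in the axiomatic system HDML-AX described below is valid: for all HDML formulas $\varphi$, if $\vdash\varphi$ then $\varphi$ is true at every cell of every HDML model.
   Context: A cubical set consists of pairwise disjoint sets $Q_n$ ($n\in\mathbb N$), $Q=\bigcup_n Q_n$, and for $n\ge1$, $1\le i\le n$, maps $s_i,t_i:Q_n\to Q_{n-1}$ satisfying $\alpha_i\circ\beta_j=\beta_{j-1}\circ\alpha_i$ for $1\le i<j\le n$, $\alpha,\beta\in\{s,t\}$. An HDML model is $\mathcal H=(Q,\bar s,\bar t,l,V)$ with $l:Q_1\to\Sigma$ satisfying $l(s_i(q))=l(t_i(q))$ for $q\in Q_2$, $i\in\{1,2\}$, and $V:Q\to2^{AP}$. HDML formulas: $\varphi::=p\mid\bot\mid\varphi\to\varphi\mid\langle\mathsf s\rangle\varphi\mid\langle\mathsf t\rangle\varphi$ with standard Boolean abbreviations ($\neg,\top,\wedge,\vee,\leftrightarrow$), $[\mathsf s]\varphi:=\neg\langle\mathsf s\rangle\neg\varphi$, $[\mathsf t]\varphi:=\neg\langle\mathsf t\rangle\neg\varphi$, $\langle\mathsf t\rangle^0\varphi=\varphi$, $\langle\mathsf t\rangle^{i+1}\varphi=\langle\mathsf t\rangle\langle\mathsf t\rangle^{i}\varphi$. Satisfaction at $q\in Q_n$: $p$ iff $p\in V(q)$; $\bot$ never; $\to$ classical; $\langle\mathsf s\rangle\psi$ iff some $q'\in Q_{n+1}$ and $1\le i\le n+1$ have $s_i(q')=q$ and $q'\models\psi$; $\langle\mathsf t\rangle\psi$ iff some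 $1\le i\le n$ has $t_i(q)\models\psi$. For $i\ge1$, $\langle\mathsf t\rangle(i)$ denotes any formula $\bigwedge_{j=1}^{i}\langle\mathsf t\rangle\beta_j$ where $\beta_1,\dots,\beta_i$ are propositional formulas (over atomic propositions, $\bot$, $\to$) such that $\beta_j\wedge\beta_k$ is a propositional contradiction for $j\ne k$ (e.g. $\langle\mathsf t\rangle p\wedge\langle\mathsf t\rangle\neg p$ for $i=2$). The system HDML-AX has axioms: (A1) all instances of propositional tautologies; (A2) $\langle\mathsf s\rangle\bot\leftrightarrow\bot$ and $\langle\mathsf t\rangle\bot\leftrightarrow\bot$; (A3) $\langle\mathsf s\rangle(\varphi\vee\varphi')\leftrightarrow\langle\mathsf s\rangle\varphi\vee\langle\mathsf s\rangle\varphi'$ and the same for $\langle\mathsf t\rangle$; (A4) $[\mathsf s]\varphi\leftrightarrow\neg\langle\mathsf s\rangle\neg\varphi$ and $[\mathsf t]\varphi\leftrightarrow\neg\langle\mathsf t\rangle\neg\varphi$; (A5) $\langle\mathsf t\rangle(i)\to\langle\mathsf t\rangle^i\top$ for all $i\ge1$; (A6) $\langle\mathsf t\rangle^2\top\to(\langle\mathsf t\rangle[\mathsf t]\varphi\to[\mathsf t]\langle\mathsf t\rangle\varphi)$; (A7) $\langle\mathsf s\rangle[\mathsf t]\varphi\to[\mathsf t]\langle\mathsf s\rangle\varphi$ and $\langle\mathsf t\rangle[\mathsf s]\varphi\to[\mathsf s]\langle\mathsf t\rangle\varphi$; (A8) $\langle\mathsf s\rangle\langle\mathsf t\rangle^i\top\to[\mathsf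 s]\langle\mathsf t\rangle^i\top$ and $\langle\mathsf t\rangle\langle\mathsf t\rangle^i\top\to[\mathsf t]\langle\mathsf t\rangle^i\top$ for all $i\ge0$; (A9) $\langle\mathsf t\rangle^i\top\to[\mathsf s]\langle\mathsf t\rangle\langle\mathsf t\rangle^i\top$ and $\langle\mathsf s\rangle\langle\mathsf t\rangle\langle\mathsf t\rangle^i\top\to\langle\mathsf t\rangle^i\top$ for all $i\ge0$; (A10) $\langle\mathsf s\rangle\langle\mathsf s\rangle\langle\mathsf t\rangle\varphi\to\langle\mathsf s\rangle\langle\mathsf t\rangle\langle\mathsf s\rangle\varphi$ and $\langle\mathsf s\rangle\langle\mathsf t\rangle\langle\mathsf t\rangle\varphi\to\langle\mathsf t\rangle\langle\mathsf s\rangle\langle\mathsf t\rangle\varphi$. Rules: modus ponens; from $\varphi\to\varphi'$ infer $\langle\mathsf s\rangle\varphi\to\langle\mathsf s\rangle\varphi'$; from $\varphi\to\varphi'$ infer $\langle\mathsf t\rangle\varphi\to\langle\mathsf t\rangle\varphi'$; uniform substitution of formulas for atomic propositions. $\vdash\varphi$ means $\varphi$ is derivable. *)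

From Stdlib Require Import List Arith.
Import ListNotations.

Set Implicit Arguments.

Inductive form (AP : Type) : Type :=
| Var : AP -> form AP
| Bot : form AP
| Imp : form AP -> form AP -> form AP
| Ds  : form AP -> form AP
| Dt  : form AP -> form AP.
Arguments Bot {AP}.

Section Abbrev.
Variable AP : Type.
Definition Neg (a : form AP) : form AP := Imp a Bot.
Definition Top : form AP := Neg Bot.
Definition Or (a b : form AP) : form AP := Imp (Neg a) b.
Definition And (a b : form AP) : form AP := Neg (Imp a (Neg b)).
Definition Iff (a b : form AP) : form AP := And (Imp a b) (Imp b a).
Definition Bs (a : form AP) : form AP := Neg (Ds (Neg a)).
Definition Bt (a : form AP) : form AP := Neg (Dt (Neg a)).
Fixpoint Dt_pow (i : nat) (a : form AP) : form AP :=
  match i with 0 => a | S k => Dt (Dt_pow k a) end.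
Fixpoint BigAnd (l : list (form AP)) : form AP :=
  match l with
  | [] => Top
  | [x] => x
  | x :: xs => And x (BigAnd xs)
  end.

Fixpoint is_prop (a : form AP) : Prop :=
  match a with
  | Var _ => True | Bot => True
  | Imp a b => is_prop a /\ is_prop b
  | Ds _ => False | Dt _ => False
  end.
Fixpoint peval (v : AP -> bool) (a : form AP) : bool :=
  match a with
  | Var p => v p
  | Bot => false
  | Imp a b => implb (peval v a) (peval v b)
  | Ds _ => false | Dt _ => false
  end.
Definition prop_contradiction (a : form AP) : Prop :=
  is_prop a /\ forall v, peval v a = false.

Definition Dt_i_formula (betas : list (form AP)) : form AP :=
  BigAnd (map (@Dt AP) betas).
Definition exclusive_props (betas : list (form AP)) : Prop :=
  (forall b, In b betas -> is_prop b) /\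
  (forall j k, j < length betas -> k < length betas -> j <> k ->
     prop_contradiction (And (nth j betas Bot) (nth k betas Bot))).

Fixpoint subst (sg : AP -> form AP) (a : form AP) : form AP :=
  match a with
  | Var p => sg p
  | Bot => Bot
  | Imp a b => Imp (subst sg a) (subst sg b)
  | Ds a => Ds (subst sg a)
  | Dt a => Dt (subst sg a)
  end.
End Abbrev.
Arguments Top {AP}.

Inductive pform : Type :=
| PVar : nat -> pform
| PBot : pform
| PImp : pform -> pform -> pform.

Fixpoint pf_eval (v : nat -> bool) (t : pform) : bool :=
  match t with
  | PVar k => v k
  | PBot => false
  | PImp a b => implb (pf_eval v a) (pf_eval v b)
  end.
Definition tautology (t : pform) : Prop := forall v, pf_eval v t = true.
Fixpoint pf_inst (AP : Type) (sg : nat -> form AP) (t : pform) : form AP :=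
  match t with
  | PVar k => sg k
  | PBot => Bot
  | PImp a b => Imp (pf_inst sg a) (pf_inst sg b)
  end.

(* Cubical set: graded family Q n (pairwise disjoint by construction),
   face maps s_i, t_i : Q (n+1) -> Q n  (meaningful for 1 <= i <= n+1). *)
Record cubical_set : Type := {
  cell : nat -> Type;
  src : forall n : nat, nat -> cell (S n) -> cell n;
  tgt : forall n : nat, nat -> cell (S n) -> cell n
}.

Definition face (C : cubical_set) (b : bool) : forall n, nat -> cell C (S n) -> cell C n :=
  if b then src C else tgt C.

Definition cubical_identities (C : cubical_set) : Prop :=
  forall (m i j : nat) (a b : bool) (q : cell C (S (S m))),
    1 <= i -> i < j -> j <= S (S m) ->
    face C a m i (face C b (S m) j q) = face C b m (j - 1) (face C a (S m) i q).

Record hdml_model (AP Sig : Type) : Type := {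
  cs : cubical_set;
  cs_ok : cubical_identities cs;
  lab : cell cs 1 -> Sig;
  lab_ok : forall (q : cell cs 2) (i : nat), (i = 1 \/ i = 2) ->
             lab (src cs 1 i q) = lab (tgt cs 1 i q);
  val : forall n : nat, cell cs n -> AP -> Prop
}.

Fixpoint sat (AP Sig : Type) (M : hdml_model AP Sig) (f : form AP)
  : forall n : nat, cell (cs M) n -> Prop :=
  match f with
  | Var p => fun n q => val M n q p
  | Bot => fun _ _ => False
  | Imp a b => fun n q => sat M a n q -> sat M b n q
  | Ds a => fun n q =>
      exists (q' : cell (cs M) (S n)) (i : nat),
        1 <= i <= S n /\ src (cs M) n i q' = q /\ sat M a (S n) q'
  | Dt a => fun n =>
      match n as n0 return cell (cs M) n0 -> Prop with
      | 0 => fun _ => False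
      | S m => fun q => exists i : nat, 1 <= i <= S m /\ sat M a m (tgt (cs M) m i q)
      end
  end.

Definition valid (AP : Type) (f : form AP) : Prop :=
  forall (Sig : Type) (M : hdml_model AP Sig) (n : nat) (q : cell (cs M) n), sat M f n q.

Inductive derivable (AP : Type) : form AP -> Prop :=
| ax1 : forall (t : pform) (sg : nat -> form AP), tautology t -> derivable (pf_inst sg t)
| ax2s : derivable (Iff (Ds Bot) Bot)
| ax2t : derivable (Iff (Dt Bot) Bot)
| ax3s : forall a b, derivable (Iff (Ds (Or a b)) (Or (Ds a) (Ds b)))
| ax3t : forall a b, derivable (Iff (Dt (Or a b)) (Or (Dt a) (Dt b)))
| ax4s : forall a, derivable (Iff (Bs a) (Neg (Ds (Neg a))))
| ax4t : forall a, derivable (Iff (Bt a) (Neg (Dt (Neg a))))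
| ax5 : forall betas, 1 <= length betas -> exclusive_props betas ->
          derivable (Imp (Dt_i_formula betas) (Dt_pow (length betas) Top))
| ax6 : forall a, derivable (Imp (Dt_pow 2 Top) (Imp (Dt (Bt a)) (Bt (Dt a))))
| ax7a : forall a, derivable (Imp (Ds (Bt a)) (Bt (Ds a)))
| ax7b : forall a, derivable (Imp (Dt (Bs a)) (Bs (Dt a)))
| ax8a : forall i, derivable (Imp (Ds (Dt_pow i Top)) (Bs (Dt_pow i Top)))
| ax8b : forall i, derivable (Imp (Dt (Dt_pow i Top)) (Bt (Dt_pow i Top)))
| ax9a : forall i, derivable (Imp (Dt_pow i Top) (Bs (Dt (Dt_pow i Top))))
| ax9b : forall i, derivable (Imp (Ds (Dt (Dt_pow i Top))) (Dt_pow i Top))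
| ax10a : forall a, derivable (Imp (Ds (Ds (Dt a))) (Ds (Dt (Ds a))))
| ax10b : forall a, derivable (Imp (Ds (Dt (Dt a))) (Dt (Ds (Dt a))))
| r_mp : forall a b, derivable (Imp a b) -> derivable a -> derivable b
| r_mons : forall a b, derivable (Imp a b) -> derivable (Imp (Ds a) (Ds b))
| r_mont : forall a b, derivable (Imp a b) -> derivable (Imp (Dt a) (Dt b))
| r_subst : forall (sg : AP -> form AP) a, derivable a -> derivable (subst sg a).

(** The modal axioms are
    read off the cubical identities: [<t>^i T] holds exactly at cells of
    dimension at least [i], which settles the dimension axioms (A8)-(A9);
    the commutation axioms (A6), (A7), (A10) exchange two face maps by the
    identity [a_i b_j = b_(j-1) a_i]; and (A5) is a pigeonhole argument, since
    mutually exclusive propositional formulas must hold at pairwise distinct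
    target faces.  Uniform substitution is sound because [subst sg a] holds
    in a model exactly when [a] holds in the same cubical set with the
    valuation [p |-> [sg p]]. *)
From Stdlib Require Import List Arith Lia Classical ClassicalEpsilon.
Import ListNotations.

Definition truth (P : Prop) : bool :=
  if excluded_middle_informative P then true else false.

Lemma truthP (P : Prop) : truth P = true <-> P.
Proof.
  unfold truth; destruct (excluded_middle_informative P); split; auto; discriminate.
Qed.

Lemma finite_choice_list (P : nat -> nat -> Prop) (n : nat) :
  (forall j, j < n -> exists i, P j i) ->
  exists l, length l = n /\ forall j, j < n -> P j (nth j l 0).
Proof.
  induction n as [|n IH]; intros H.
  - exists []; split; [reflexivity | intros; lia].
  - destruct IH as [l [Hlen Hl]]; [intros j Hj; apply H; lia|].
    destruct (H n ltac:(lia)) as [i Hi].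
    exists (l ++ [i]); split; [rewrite length_app; simpl; lia|].
    intros j Hj; destruct (Nat.eq_dec j n) as [->|Hjn].
    + rewrite app_nth2, Hlen, Nat.sub_diag by lia; exact Hi.
    + rewrite app_nth1 by lia; apply Hl; lia.
Qed.

Section Semantics.
Variables (AP Sig : Type) (M : hdml_model AP Sig).
Let C := cs M.

Definition holds (f : form AP) : Prop := forall n (q : cell C n), sat M f n q.

Lemma src_src m i j (q : cell C (S (S m))) : 1 <= i -> i < j -> j <= S (S m) ->
  src C m i (src C (S m) j q) = src C m (j - 1) (src C (S m) i q).
Proof. exact (cs_ok M true true q). Qed.

Lemma src_tgt m i j (q : cell C (S (S m))) : 1 <= i -> i < j -> j <= S (S m) ->
  src C m i (tgt C (S m) j q) = tgt C m (j - 1) (src C (S m) i q).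
Proof. exact (cs_ok M true false q). Qed.

Lemma tgt_src m i j (q : cell C (S (S m))) : 1 <= i -> i < j -> j <= S (S m) ->
  tgt C m i (src C (S m) j q) = src C m (j - 1) (tgt C (S m) i q).
Proof. exact (cs_ok M false true q). Qed.

Lemma tgt_tgt m i j (q : cell C (S (S m))) : 1 <= i -> i < j -> j <= S (S m) ->
  tgt C m i (tgt C (S m) j q) = tgt C m (j - 1) (tgt C (S m) i q).
Proof. exact (cs_ok M false false q). Qed.

Lemma sat_And a b n (q : cell C n) :
  sat M (And a b) n q <-> sat M a n q /\ sat M b n q.
Proof. simpl; split; [intros H; split; apply NNPP; tauto | tauto]. Qed.

Lemma sat_Or a b n (q : cell C n) :
  sat M (Or a b) n q <-> sat M a n q \/ sat M b n q.
Proof. simpl; split; [intros H; destruct (classic (sat M a n q)) | ]; tauto. Qed.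

Lemma sat_Iff a b n (q : cell C n) :
  sat M (Iff a b) n q <-> (sat M a n q <-> sat M b n q).
Proof. unfold Iff; rewrite sat_And; simpl; tauto. Qed.

Lemma sat_Bs a n (q : cell C n) : sat M (Bs a) n q <->
  (forall q' i, 1 <= i <= S n -> src C n i q' = q -> sat M a (S n) q').
Proof.
  simpl; split.
  - intros H q' i Hi E; apply NNPP; intros N; apply H; exists q', i; auto.
  - intros H [q' [i [Hi [E N]]]]; apply N; eapply H; eauto.
Qed.

(** At dimension [0] there are no target faces, so [[t] a] holds vacuously. *)
Lemma sat_Bt a m (q : cell C (S m)) : sat M (Bt a) (S m) q <->
  (forall i, 1 <= i <= S m -> sat M a m (tgt C m i q)).
Proof.
  simpl; split.
  - intros H i Hi; apply NNPP; intros N; apply H; exists i; auto.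
  - intros H [i [Hi N]]; apply N, H, Hi.
Qed.

Lemma sat_Dt_pow_Top i : forall n (q : cell C n), sat M (Dt_pow i Top) n q <-> i <= n.
Proof.
  induction i as [|i IH]; intros [|m] q; simpl;
    try solve [split; intros; tauto || lia].
  split.
  - intros [j [_ H]]; apply IH in H; lia.
  - intros H; exists 1; split; [lia | apply IH; lia].
Qed.

Lemma sat_pf_inst (sg : nat -> form AP) t n (q : cell C n) :
  sat M (pf_inst sg t) n q <-> pf_eval (fun k => truth (sat M (sg k) n q)) t = true.
Proof.
  induction t as [k| |t1 IH1 t2 IH2]; simpl.
  - rewrite truthP; tauto.
  - split; [tauto | discriminate].
  - rewrite IH1, IH2; destruct (pf_eval _ t1), (pf_eval _ t2); simpl; intuition.
Qed.

Lemma sat_prop (a : form AP) n (q : cell C n) : is_prop a ->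
  (sat M a n q <-> peval (fun p => truth (val M n q p)) a = true).
Proof.
  induction a as [p| |a1 IH1 a2 IH2|a|a]; simpl; intros Ha; try tauto.
  - rewrite truthP; tauto.
  - split; [tauto | discriminate].
  - destruct Ha as [H1 H2]; rewrite (IH1 H1), (IH2 H2).
    destruct (peval _ a1), (peval _ a2); simpl; intuition.
Qed.

Lemma prop_contradiction_unsat a n (q : cell C n) :
  prop_contradiction a -> ~ sat M a n q.
Proof. intros [Ha Hf] H; rewrite sat_prop, Hf in H by exact Ha; discriminate. Qed.

Lemma sat_BigAnd_In l n (q : cell C n) :
  sat M (BigAnd l) n q -> forall x, In x l -> sat M x n q.
Proof.
  induction l as [|a [|b l] IH]; intros H x Hx; [destruct Hx | |].
  - destruct Hx as [<-|[]]; exact H.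
  - change (sat M (And a (BigAnd (b :: l))) n q) in H; rewrite sat_And in H.
    destruct Hx as [<-|Hx]; [tauto | apply IH; tauto].
Qed.

Lemma Dt_i_formula_faces betas m (q : cell C (S m)) :
  sat M (Dt_i_formula betas) (S m) q ->
  exists l, length l = length betas /\ forall j, j < length betas ->
    1 <= nth j l 0 <= S m /\ sat M (nth j betas Bot) m (tgt C m (nth j l 0) q).
Proof.
  intros H; apply (finite_choice_list (fun j i =>
    1 <= i <= S m /\ sat M (nth j betas Bot) m (tgt C m i q))); intros j Hj.
  exact (sat_BigAnd_In _ _ _ H _ (in_map _ _ _ (nth_In _ Bot Hj))).
Qed.

Lemma Dt_i_formula_dim betas n (q : cell C n) : exclusive_props betas ->
  sat M (Dt_i_formula betas) n q -> length betas <= n.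
Proof.
  intros [_ Hexcl] H; destruct n as [|m].
  - destruct betas as [|b betas]; [simpl; lia|].
    destruct (sat_BigAnd_In _ _ _ H (Dt b) (or_introl eq_refl)).
  - destruct (Dt_i_formula_faces _ _ _ H) as [l [Hlen Hl]].
    assert (Hnodup : NoDup l).
    { apply (NoDup_nth l 0); intros j k Hj Hk E; rewrite Hlen in Hj, Hk.
      destruct (Nat.eq_dec j k) as [|Hjk]; [assumption | exfalso].
      destruct (Hl j Hj) as [_ Sj], (Hl k Hk) as [_ Sk]; rewrite E in Sj.
      apply (prop_contradiction_unsat _ _ (tgt C m (nth k l 0) q) (Hexcl j k Hj Hk Hjk)).
      apply sat_And; auto. }
    assert (Hincl : incl l (seq 1 (S m))).
    { intros x Hx; apply In_nth with (d := 0) in Hx as [j [Hj <-]].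
      rewrite Hlen in Hj; apply in_seq; destruct (Hl j Hj); lia. }
    pose proof (NoDup_incl_length Hnodup Hincl) as Hcard.
    rewrite length_seq in Hcard; lia.
Qed.

Lemma holds_tautology_instance t (sg : nat -> form AP) :
  tautology t -> holds (pf_inst sg t).
Proof. intros Ht n q; apply sat_pf_inst, Ht. Qed.

Lemma holds_Iff_refl a : holds (Iff a a).
Proof. intros n q; apply sat_Iff; tauto. Qed.

Lemma holds_Ds_Bot : holds (Iff (Ds Bot) Bot).
Proof. intros n q; apply sat_Iff; simpl; split; [intros [? [? [_ [_ []]]]] | tauto]. Qed.

Lemma holds_Dt_Bot : holds (Iff (Dt Bot) Bot).
Proof. intros [|m] q; apply sat_Iff; simpl; [|split; [intros [? [_ []]]|]]; tauto. Qed.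

Lemma holds_Ds_Or a b : holds (Iff (Ds (Or a b)) (Or (Ds a) (Ds b))).
Proof.
  intros n q; apply sat_Iff; rewrite sat_Or; simpl; split.
  - intros [q' [i [Hi [E Hab]]]]; apply sat_Or in Hab as [Ha|Hb]; eauto 6.
  - intros [[q' [i [Hi [E H]]]]|[q' [i [Hi [E H]]]]];
      exists q', i; (split; [exact Hi | split; [exact E | apply sat_Or; tauto]]).
Qed.

Lemma holds_Dt_Or a b : holds (Iff (Dt (Or a b)) (Or (Dt a) (Dt b))).
Proof.
  intros [|m] q; apply sat_Iff; rewrite sat_Or; simpl; [tauto|split].
  - intros [i [Hi Hab]]; apply sat_Or in Hab as [Ha|Hb]; eauto.
  - intros [[i [Hi H]]|[i [Hi H]]]; exists i; split; auto; apply sat_Or; auto.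
Qed.

Lemma holds_Dt_i_formula betas : exclusive_props betas ->
  holds (Imp (Dt_i_formula betas) (Dt_pow (length betas) Top)).
Proof. intros Hexcl n q H; apply sat_Dt_pow_Top; eapply Dt_i_formula_dim; eauto. Qed.

Lemma holds_Dt_Bt_Bt_Dt a : holds (Imp (Dt_pow 2 Top) (Imp (Dt (Bt a)) (Bt (Dt a)))).
Proof.
  intros n q H2; apply sat_Dt_pow_Top in H2.
  destruct n as [|[|m]]; try lia; intros [i [Hi H]].
  rewrite sat_Bt in H; apply sat_Bt; intros k Hk; simpl.
  destruct (lt_eq_lt_dec k i) as [[Hki| ->]|Hik].
  - exists (i - 1); split; [lia|]; rewrite <- tgt_tgt by lia; apply H; lia.
  - exists 1; split; [lia | apply H; lia].
  - exists i; split; [lia|]; rewrite tgt_tgt by lia; apply H; lia.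
Qed.

Lemma holds_Ds_Bt_Bt_Ds a : holds (Imp (Ds (Bt a)) (Bt (Ds a))).
Proof.
  intros [|m] q [q' [i [Hi [<- H]]]]; [simpl; tauto|].
  rewrite sat_Bt in H; apply sat_Bt; intros j Hj; simpl.
  destruct (lt_dec j i).
  - exists (tgt C (S m) j q'), (i - 1); repeat split; try lia.
    + symmetry; apply tgt_src; lia.
    + apply H; lia.
  - exists (tgt C (S m) (S j) q'), i; repeat split; try lia.
    + rewrite src_tgt by lia; f_equal; lia.
    + apply H; lia.
Qed.

Lemma holds_Dt_Bs_Bs_Dt a : holds (Imp (Dt (Bs a)) (Bs (Dt a))).
Proof.
  intros [|m] q; [simpl; tauto|]; intros [i [Hi H]].
  rewrite sat_Bs in H; apply sat_Bs; intros q' j Hj <-; simpl.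
  destruct (lt_dec i j).
  - exists i; split; [lia|]; apply (H _ (j - 1)); [lia|].
    symmetry; apply tgt_src; lia.
  - exists (S i); split; [lia|]; apply (H _ j); [lia|].
    rewrite src_tgt by lia; f_equal; lia.
Qed.

Lemma holds_Ds_Dt_pow_Bs i : holds (Imp (Ds (Dt_pow i Top)) (Bs (Dt_pow i Top))).
Proof.
  intros n q [q' [k [_ [_ H]]]]; apply sat_Bs; intros.
  rewrite sat_Dt_pow_Top in *; exact H.
Qed.

Lemma holds_Dt_Dt_pow_Bt i : holds (Imp (Dt (Dt_pow i Top)) (Bt (Dt_pow i Top))).
Proof.
  intros [|m] q; [simpl; tauto|]; intros [k [_ H]]; apply sat_Bt; intros.
  rewrite sat_Dt_pow_Top in *; exact H.
Qed.

Lemma holds_Dt_pow_Bs_Dt i : holds (Imp (Dt_pow i Top) (Bs (Dt (Dt_pow i Top)))).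
Proof.
  intros n q H; apply sat_Dt_pow_Top in H; apply sat_Bs; intros.
  exists 1; split; [lia | apply sat_Dt_pow_Top; exact H].
Qed.

Lemma holds_Ds_Dt_Dt_pow i : holds (Imp (Ds (Dt (Dt_pow i Top))) (Dt_pow i Top)).
Proof.
  intros n q [q' [k [_ [_ [j [_ H]]]]]]; rewrite sat_Dt_pow_Top in *; lia.
Qed.

Lemma holds_Ds_Ds_Dt a : holds (Imp (Ds (Ds (Dt a))) (Ds (Dt (Ds a)))).
Proof.
  intros n q [q1 [i1 [Hi1 [<- [q2 [i2 [Hi2 [<- [j [Hj Ha]]]]]]]]]]; simpl.
  destruct (Nat.eq_dec j i2) as [->|Hj2]; [destruct (lt_dec i1 i2)|].
  - exists (src C (S n) i1 q2), (i2 - 1); repeat split; try lia.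
    + symmetry; apply src_src; lia.
    + exists (i2 - 1); split; [lia|].
      exists (tgt C (S n) i2 q2), i1; split; [lia | split; [apply src_tgt; lia | exact Ha]].
  - exists (src C (S n) (S i1) q2), i2; repeat split; try lia.
    + rewrite src_src by lia; f_equal; lia.
    + exists i2; split; [lia|].
      exists (tgt C (S n) i2 q2), i1; split; [lia | split; [|exact Ha]].
      rewrite tgt_src by lia; f_equal; lia.
  - exists (src C (S n) i2 q2), i1; repeat split; auto; try lia.
    destruct (lt_dec j i2).
    + exists j; split; [lia|].
      exists (tgt C (S n) j q2), (i2 - 1); split; [lia | split; [|exact Ha]].
      symmetry; apply tgt_src; lia.
    + exists (j - 1); split; [lia|].
      exists (tgt C (S n) j q2), i2; split; [lia | split; [apply src_tgt; lia | exact Ha]].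
Qed.

Lemma holds_Ds_Dt_Dt a : holds (Imp (Ds (Dt (Dt a))) (Dt (Ds (Dt a)))).
Proof.
  intros n q [q1 [i1 [Hi1 [<- H]]]].
  destruct n as [|m]; [destruct H as [? [_ []]]|].
  destruct H as [j1 [Hj1 [j2 [Hj2 Ha]]]]; simpl.
  destruct (Nat.eq_dec j1 i1) as [->|Hji]; [destruct (lt_dec j2 i1)|destruct (lt_dec j1 i1)].
  - exists j2; split; [lia|].
    exists (tgt C (S m) j2 q1), (i1 - 1); repeat split; try lia.
    + symmetry; apply tgt_src; lia.
    + exists (i1 - 1); split; [lia|]; rewrite <- tgt_tgt by lia; exact Ha.
  - exists j2; split; [lia|].
    exists (tgt C (S m) (S j2) q1), i1; repeat split; try lia.
    + rewrite src_tgt by lia; f_equal; lia.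
    + exists i1; split; [lia|].
      rewrite tgt_tgt by lia; replace (S j2 - 1) with j2 by lia; exact Ha.
  - exists j1; split; [lia|].
    exists (tgt C (S m) j1 q1), (i1 - 1); repeat split; try lia.
    + symmetry; apply tgt_src; lia.
    + exists j2; split; [lia | exact Ha].
  - exists (j1 - 1); split; [lia|].
    exists (tgt C (S m) j1 q1), i1; repeat split; try lia.
    + apply src_tgt; lia.
    + exists j2; split; [lia | exact Ha].
Qed.

Lemma holds_mp a b : holds (Imp a b) -> holds a -> holds b.
Proof. intros Hab Ha n q; exact (Hab n q (Ha n q)). Qed.

Lemma holds_Ds_mono a b : holds (Imp a b) -> holds (Imp (Ds a) (Ds b)).
Proof.
  intros Hab n q [q' [i [Hi [E Ha]]]]; exists q', i.
  split; [exact Hi | split; [exact E | exact (Hab _ q' Ha)]].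
Qed.

Lemma holds_Dt_mono a b : holds (Imp a b) -> holds (Imp (Dt a) (Dt b)).
Proof.
  intros Hab [|m] q; simpl; [tauto|]; intros [i [Hi Ha]].
  exists i; split; [exact Hi | exact (Hab _ _ Ha)].
Qed.

Definition subst_model (sg : AP -> form AP) : hdml_model AP Sig :=
  {| cs := cs M; cs_ok := cs_ok M; lab := lab M; lab_ok := lab_ok M;
     val := fun n q p => sat M (sg p) n q |}.

Lemma sat_subst sg a : forall n (q : cell C n),
  sat (subst_model sg) a n q <-> sat M (subst sg a) n q.
Proof.
  induction a as [p| |a1 IH1 a2 IH2|a IH|a IH]; intros n q; simpl; try tauto.
  - rewrite IH1, IH2; tauto.
  - split; intros [q' [i [Hi [E H]]]]; exists q', i;
      (split; [exact Hi | split; [exact E | apply IH, H]]).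
  - destruct n; simpl; [tauto|].
    split; intros [i [Hi H]]; exists i; split; auto; apply IH, H.
Qed.

End Semantics.

Lemma valid_subst AP (sg : AP -> form AP) a : valid a -> valid (subst sg a).
Proof. intros Ha Sig M n q; apply sat_subst, Ha. Qed.

Theorem mainTheorem8 : forall (AP : Type) (phi : form AP),
  derivable phi -> valid phi.
Proof.
  intros AP phi D; induction D; [.. | apply valid_subst, IHD]; intros Sig M.
  - apply holds_tautology_instance; assumption.
  - apply holds_Ds_Bot.
  - apply holds_Dt_Bot.
  - apply holds_Ds_Or.
  - apply holds_Dt_Or.
  - (* [Bs] and [Bt] are defined as these duals. *)
    apply holds_Iff_refl.
  - apply holds_Iff_refl.
  - apply holds_Dt_i_formula; assumption.
  - apply holds_Dt_Bt_Bt_Dt.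
  - apply holds_Ds_Bt_Bt_Ds.
  - apply holds_Dt_Bs_Bs_Dt.
  - apply holds_Ds_Dt_pow_Bs.
  - apply holds_Dt_Dt_pow_Bt.
  - apply holds_Dt_pow_Bs_Dt.
  - apply holds_Ds_Dt_Dt_pow.
  - apply holds_Ds_Ds_Dt.
  - apply holds_Ds_Dt_Dt.
  - exact (@holds_mp _ _ M _ _ (IHD1 Sig M) (IHD2 Sig M)).
  - exact (@holds_Ds_mono _ _ M _ _ (IHD Sig M)).
  - exact (@holds_Dt_mono _ _ M _ _ (IHD Sig M)).
Qed.
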